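(* Let $n$ be odd and let $g_0,g_1,g_2,g_3:\mathbb{V}_n\to\mathbb{F}_2$ be semi-bent functions with $g_0\oplus g_1\oplus g_2\oplus g_3=0$. Then $g_0g_1\oplus g_0g_2\oplus g_1g_2$ is semi-bent if and only if for every $u\in\mathbb{V}_n$: $\mathcal{W}_{g_i}(u)=0$ for an even number of indices $i\in\{0,1,2,3\}$, and if $\mathcal{W}_{g_i}(u)\neq0$ for all $i\in\{0,1,2,3\}$, then either $\mathcal{W}_{g_0}(u)\mathcal{W}_{g_1}(u)=\mathcal{W}_{g_2}(u)\mathcal{W}_{g_3}(u)$, or the number of $i$ with $\mathcal{W}_{g_i}(u)=2^{(n+1)/2}$ is $1$ or $3$ but it is not the case that $\mathcal{W}_{g_0}(u)=\mathcal{W}_{g_1}(u)=\mathcal{W}_{g_2}(u)$.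
   Context: $\mathbb{V}_n$ is an $n$-dimensional $\mathbb{F}_2$-vector space with inner product $u\cdot x$; $\mathcal{W}_g(u)=\sum_{x\in\mathbb{V}_n}(-1)^{g(x)\oplus u\cdot x}$. For odd $n$, $g$ is semi-bent if $\mathcal{W}_g(u)\in\{0,\pm2^{\frac{n+1}{2}}\}$ for all $u$. *)

From mathcomp Require Import all_boot all_order all_algebra.
Set Implicit Arguments. Unset Strict Implicit. Unset Printing Implicit Defensive.
Import GRing.Theory Num.Theory.
Local Open Scope ring_scope.

Definition V (n : nat) := {ffun 'I_n -> bool}.

Definition dot (n : nat) (u x : V n) : bool :=
  \big[xorb/false]_(i < n) (u i && x i).

Definition walsh (n : nat) (g : V n -> bool) (u : V n) : int :=
  \sum_(x : V n) (-1) ^+ (g x (+) dot u x).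

Definition semibent (n : nat) (g : V n -> bool) : Prop :=
  forall u : V n, walsh g u \in [:: 0; 2 ^+ (n.+1)./2; - 2 ^+ (n.+1)./2].

From mathcomp Require Import all_boot all_order all_algebra.
Set Implicit Arguments. Unset Strict Implicit. Unset Printing Implicit Defensive.
Import GRing.Theory Num.Theory.
Local Open Scope ring_scope.

(* The majority function m(a,b,c) = ab + ac + bc satisfies, pointwise,
   2 (-1)^m = (-1)^a + (-1)^b + (-1)^c - (-1)^(a+b+c).  Since g3 = g0 + g1 + g2,
   summing against the characters gives 2 W_m = W_0 + W_1 + W_2 - W_3.  Writing
   W_i = c e_i with c = 2^((n+1)/2) and e_i in {0, 1, -1}, the function m is
   semi-bent iff e_0 + e_1 + e_2 - e_3 lies in {0, 2, -2} at every point, and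
   the stated condition is that same constraint on the four signs, checked by
   enumerating the 81 sign patterns. *)

Definition ternary (c : int) : seq int := [:: 0; c; - c].

Lemma signr_majority (a b c d : bool) :
  2 * (-1) ^+ ((a && b) (+) (a && c) (+) (b && c) (+) d) =
  (-1) ^+ (a (+) d) + (-1) ^+ (b (+) d) + (-1) ^+ (c (+) d)
    - (-1) ^+ (a (+) b (+) c (+) d) :> int.
Proof. by case: a; case: b; case: c; case: d. Qed.

Lemma walsh_majority n (g0 g1 g2 g3 : V n -> bool) (u : V n) :
  (forall x, g3 x = g0 x (+) g1 x (+) g2 x) ->
  2 * walsh (fun x => (g0 x && g1 x) (+) (g0 x && g2 x) (+) (g1 x && g2 x)) u =
  walsh g0 u + walsh g1 u + walsh g2 u - walsh g3 u.
Proof.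
move=> g3E; rewrite /walsh mulr_sumr -!big_split /= -sumrB.
by apply: eq_bigr => x _; rewrite g3E signr_majority.
Qed.

Lemma ternaryP (c w : int) :
  w \in ternary c -> exists2 e : int, e \in ternary 1 & w = c * e.
Proof.
rewrite !inE => /or3P[]/eqP->.
- by exists 0; rewrite ?mulr0.
- by exists 1; rewrite ?mulr1.
- by exists (-1); rewrite ?mulrN1.
Qed.

Lemma mem_ternary_half (c w s : int) : c != 0 -> 2 * w = c * s ->
  (w \in ternary c) = (s \in ternary 2).
Proof.
move=> c_neq0 wE; have two_inj := @mulfI _ (2 : int) isT.
rewrite !inE -[w == 0](inj_eq two_inj) -[w == c](inj_eq two_inj).
rewrite -[w == - c](inj_eq two_inj) wE mulr0 mulrN ![2 * c]mulrC -mulrN.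
by rewrite -[X in _ == X](mulr0 c) !(inj_eq (mulfI c_neq0)).
Qed.

Definition walsh_condb (c w0 w1 w2 w3 : int) : bool :=
  let W := [:: w0; w1; w2; w3] in
  ~~ odd (count (fun w => w == 0) W) &&
  (all (fun w => w != 0) W ==>
     (w0 * w1 == w2 * w3) ||
     (count (fun w => w == c) W \in [:: 1%N; 3%N]) && ~~ ((w0 == w1) && (w1 == w2))).

Lemma walsh_condP (c w0 w1 w2 w3 : int) :
  reflect
    (let W := [:: w0; w1; w2; w3] in
     ~~ odd (count (fun w => w == 0) W) /\
     (all (fun w => w != 0) W ->
        w0 * w1 = w2 * w3 \/
        ((count (fun w => w == c) W \in [:: 1%N; 3%N]) /\ ~ (w0 = w1 /\ w1 = w2))))
    (walsh_condb c w0 w1 w2 w3).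
Proof.
apply: (iffP andP) => -[even_zeros allnz]; split=> //.
- move=> /(implyP allnz)/orP[/eqP|/andP[cnt /negP neq]]; [by left | right].
  by split=> // -[e01 e12]; apply: neq; rewrite e01 e12 !eqxx.
- apply/implyP=> /allnz[->|[-> neq]]; first by rewrite eqxx.
  by apply/orP; right; apply/negP=> /andP[/eqP e01 /eqP e12]; apply: neq.
Qed.

Lemma walsh_condb_scale (c e0 e1 e2 e3 : int) : c != 0 ->
  walsh_condb c (c * e0) (c * e1) (c * e2) (c * e3) = walsh_condb 1 e0 e1 e2 e3.
Proof.
move=> c_neq0; have c_inj := mulfI c_neq0.
have scale0 e : (c * e == 0) = (e == 0) by rewrite mulf_eq0 (negbTE c_neq0).
have scale1 e : (c * e == c) = (e == 1) by rewrite -[X in _ == X]mulr1 (inj_eq c_inj).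
have cc_inj := mulfI (mulf_neq0 c_neq0 c_neq0).
rewrite /walsh_condb /= !scale0 !scale1 !(inj_eq c_inj).
by rewrite mulrACA [c * e2 * _]mulrACA (inj_eq cc_inj).
Qed.

Lemma walsh_condb_signs (e0 e1 e2 e3 : int) :
  e0 \in ternary 1 -> e1 \in ternary 1 -> e2 \in ternary 1 -> e3 \in ternary 1 ->
  (e0 + e1 + e2 - e3 \in ternary 2) = walsh_condb 1 e0 e1 e2 e3.
Proof. by rewrite !inE => /or3P[]/eqP-> /or3P[]/eqP-> /or3P[]/eqP-> /or3P[]/eqP->. Qed.

Theorem proposition4 (n : nat) (g0 g1 g2 g3 : V n -> bool) :
  odd n ->
  semibent g0 -> semibent g1 -> semibent g2 -> semibent g3 ->
  (forall x : V n, g0 x (+) g1 x (+) g2 x (+) g3 x = false) ->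
  (semibent (fun x => (g0 x && g1 x) (+) (g0 x && g2 x) (+) (g1 x && g2 x)) <->
   forall u : V n,
     let W := [:: walsh g0 u; walsh g1 u; walsh g2 u; walsh g3 u] in
     ~~ odd (count (fun w => w == 0) W) /\
     (all (fun w => w != 0) W ->
        walsh g0 u * walsh g1 u = walsh g2 u * walsh g3 u \/
        ((count (fun w => w == 2 ^+ (n.+1)./2) W \in [:: 1%N; 3%N]) /\
         ~ (walsh g0 u = walsh g1 u /\ walsh g1 u = walsh g2 u)))).
Proof.
move=> _ sb0 sb1 sb2 sb3 xor_eq0.
have g3E x : g3 x = g0 x (+) g1 x (+) g2 x.
  by move: (xor_eq0 x); case: (g0 x); case: (g1 x); case: (g2 x); case: (g3 x).
pose c : int := 2 ^+ (n.+1)./2; have c_neq0 : c != 0 by rewrite expf_neq0.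
set m := fun x => _.
have semibent_at u :
    (walsh m u \in ternary c) =
    walsh_condb c (walsh g0 u) (walsh g1 u) (walsh g2 u) (walsh g3 u).
  have /ternaryP[e0 e0s W0E] := sb0 u; have /ternaryP[e1 e1s W1E] := sb1 u.
  have /ternaryP[e2 e2s W2E] := sb2 u; have /ternaryP[e3 e3s W3E] := sb3 u.
  have := walsh_majority u g3E; rewrite W0E W1E W2E W3E -!mulrDr -mulrBr.
  move/(mem_ternary_half c_neq0)->.
  by rewrite walsh_condb_scale // walsh_condb_signs.
split=> [m_sb u | cond u].
- by apply/walsh_condP; rewrite -semibent_at; apply: m_sb.
- by rewrite /ternary semibent_at; apply/walsh_condP; apply: cond.
Qed.
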